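(* The column Capelli bitableaux $[i_1,\dots,i_h|j_1,\dots,j_h]$ ($h\ge0$, $i_r,j_r\in\{1,\dots,n\}$, the empty one being $1$) span $\mathbf{U}(gl(n))$ as a vector space; likewise the column Capelli *-bitableaux $[i_1,\dots,i_h|j_1,\dots,j_h]^*$ span $\mathbf{U}(gl(n))$.
   Context: Virtual variables: let $A_0=\{\alpha_1,\dots,\alpha_{m_0}\}$ (positive virtual symbols, parity $0$), $A_1=\{\beta_1,\dots,\beta_{m_1}\}$ (negative virtual symbols, parity $1$), $L=\{1,\dots,n\}$ (proper symbols, parity $1$), $m_0,m_1$ sufficiently large. $gl(m_0|m_1+n)$ is the Lie superalgebra with homogeneous basis $e_{a,b}$ of parity $|a|+|b|\bmod 2$ and superbracket $[e_{a,b},e_{c,d}]=\delta_{bc}e_{a,d}-(-1)^{(|a|+|b|)(|c|+|d|)}\delta_{ad}e_{c,b}$; $\mathbf{U}(gl(n))\subset \mathbf{U}(gl(m_0|m_1+n))$ via $e_{i,j}$, $i,j\in L$. A product $e_{a_m,b_m}\cdots e_{a_1,b_1}$ is irregular if there are $i\le m$ and a virtual $\gamma$ with $\#\{j\le i:b_j=\gamma\}>\#\{j<i:a_j=\gamma\}$; $\mathbf{Irr}$ is the left ideal they generate; it is known that $Virt=\mathbf{U}(gl(n))\oplus\mathbf{Irr}$ is a subalgebra with $\mathbf{Irr}$ a two-sided ideal, and $\mathfrak p:Virt\to\mathbf{U}(gl(n))$ is the projection with kernel $\mathbf{Irr}$. The column Capelli bitableau is $[i_1,\dots,i_h|j_1,\dots,j_h]=\mathfrak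 p(e_{i_1\alpha_1}\cdots e_{i_h\alpha_h}e_{\alpha_1j_1}\cdots e_{\alpha_hj_h})$ with $\alpha_1,\dots,\alpha_h$ distinct positive virtual symbols, and the column Capelli *-bitableau is $[i_1,\dots,i_h|j_1,\dots,j_h]^*=\mathfrak p(e_{i_1\beta_1}\cdots e_{i_h\beta_h}e_{\beta_1j_1}\cdots e_{\beta_hj_h})$ with $\beta_1,\dots,\beta_h$ distinct negative virtual symbols. *)

(* Free-algebra model of U(gl(m0|m1+n)) via representatives. *)
From HB Require Import structures.
From mathcomp Require Import all_boot all_algebra.
Set Implicit Arguments. Unset Strict Implicit. Unset Printing Implicit Defensive.
Import GRing.Theory.
Local Open Scope ring_scope.

(* Symbols: inl (inl k) = alpha_k (positive virtual, parity 0),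
            inl (inr k) = beta_k  (negative virtual, parity 1),
            inr i       = proper symbol i (parity 1).  Indices are 1-based. *)
Definition sym := ((nat + nat) + nat)%type.
Definition alpha (k : nat) : sym := inl (inl k).
Definition beta (k : nat) : sym := inl (inr k).
Definition prp (i : nat) : sym := inr i.
Definition par (s : sym) : bool := match s with inl (inl _) => false | _ => true end.
Definition virtual (s : sym) : bool := if s is inl _ then true else false.
Definition valid_sym (m0 m1 n : nat) (s : sym) : bool :=
  match s with
  | inl (inl k) => (1 <= k <= m0)%N
  | inl (inr k) => (1 <= k <= m1)%N
  | inr i => (1 <= i <= n)%N
  end.
Definition proper_sym (n : nat) (s : sym) : bool :=
  if s is inr i then (1 <= i <= n)%N else false.

(* letter (a,b) stands for the generator e_{a,b}; a word is a monomial,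
   read left to right: [:: l_m; ...; l_1] = e_{l_m} ... e_{l_1}. *)
Definition letter := (sym * sym)%type.
Definition word := seq letter.
Definition lpar (l : letter) : bool := par l.1 (+) par l.2.
Definition valid_letter m0 m1 n (l : letter) : bool :=
  valid_sym m0 m1 n l.1 && valid_sym m0 m1 n l.2.
Definition valid_word m0 m1 n (w : word) : bool := all (valid_letter m0 m1 n) w.

(* Irregular monomial e_{a_m b_m} ... e_{a_1 b_1}:
   exists i <= m and virtual gamma with
   #{j <= i : b_j = gamma} > #{j < i : a_j = gamma}. *)
Definition irregular (w : word) : Prop :=
  let r := rev w in
  exists (i : nat) (g : sym), (i < size r)%N /\ virtual g /\
    (count (fun l : letter => l.1 == g) (take i r) <
     count (fun l : letter => l.2 == g) (take i.+1 r))%N.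

Section FreeAlg.
Variable K : fieldType.

(* formal linear combinations of monomials (elements of the free algebra) *)
Definition fls := seq (K * word).
Definition coef (f : fls) (w : word) : K :=
  \sum_(p <- f) (if p.2 == w then p.1 else 0).
Definition scalef (c : K) (f : fls) : fls := [seq (c * p.1, p.2) | p <- f].
Definition mulf (f g : fls) : fls := [seq (p.1 * q.1, p.2 ++ q.2) | p <- f, q <- g].
Definition wrd (w : word) : fls := [:: (1, w)].
Definition subf (f g : fls) : fls := f ++ scalef (-1) g.
Definition sgn (b : bool) : K := if b then -1 else 1.
Definition dlt (a b : sym) : K := if a == b then 1 else 0.

(* e_ab e_cd - (-1)^{(|a|+|b|)(|c|+|d|)} e_cd e_ab - [e_ab, e_cd], with
   [e_ab,e_cd] = d_bc e_ad - (-1)^{...} d_ad e_cb *)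
Definition superrel (x y : letter) : fls :=
  [:: (1, [:: x; y]);
      (- sgn (lpar x && lpar y), [:: y; x]);
      (- dlt x.2 y.1, [:: (x.1, y.2)]);
      (sgn (lpar x && lpar y) * dlt x.1 y.2, [:: (y.1, x.2)])].

(* f lies in the two-sided ideal of the free algebra on the generators of
   gl(m0|m1+n) defining U(gl(m0|m1+n)), i.e. f = 0 in U(gl(m0|m1+n)). *)
Definition inI (m0 m1 n : nat) (f : fls) : Prop :=
  exists gens : seq (K * word * letter * letter * word),
    (forall g, g \in gens ->
       [&& valid_word m0 m1 n g.1.1.1.2, valid_letter m0 m1 n g.1.1.2,
           valid_letter m0 m1 n g.1.2 & valid_word m0 m1 n g.2]) /\
    forall w, coef f w =
      coef (flatten [seq scalef g.1.1.1.1
                       (mulf (wrd g.1.1.1.2) (mulf (superrel g.1.1.2 g.1.2) (wrd g.2)))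
                    | g <- gens]) w.

Definition eqU m0 m1 n (f g : fls) : Prop := inI m0 m1 n (subf f g).

(* membership (of the class of f) in Irr, the left ideal of U(gl(m0|m1+n))
   generated by the irregular monomials *)
Definition inIrr m0 m1 n (f : fls) : Prop :=
  exists gens : seq (K * word * word),
    (forall g, g \in gens ->
       [/\ valid_word m0 m1 n g.1.2, valid_word m0 m1 n g.2 & irregular g.2]) /\
    eqU m0 m1 n f (flatten [seq scalef g.1.1 (wrd (g.1.2 ++ g.2)) | g <- gens]).

(* f represents an element of U(gl(n)) (subalgebra generated by e_ij, i,j in L) *)
Definition proper_fls (n : nat) (f : fls) : bool :=
  all (fun p : K * word =>
         all (fun l : letter => proper_sym n l.1 && proper_sym n l.2) p.2) f.

(* e_{i_1 v_1} ... e_{i_h v_h} e_{v_1 j_1} ... e_{v_h j_h}, v_r = virt r *)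
Definition cap_mono (virt : nat -> sym) (ii js : seq nat) : word :=
  mkseq (fun r => (prp (nth 0%N ii r), virt r.+1)) (size ii) ++
  mkseq (fun r => (virt r.+1, prp (nth 0%N js r))) (size ii).

(* x (an element of U(gl(n))) is the column Capelli bitableau [is|js]
   (star = false: positive virtual symbols alpha_1..alpha_h) or the column
   Capelli *-bitableau [is|js]^* (star = true: negative virtual symbols
   beta_1..beta_h), i.e. x = p(monomial): x in U(gl(n)) and monomial - x in Irr. *)
Definition is_capelli m0 m1 n (star : bool) (ii js : seq nat) (x : fls) : Prop :=
  [/\ size ii = size js,
      all (fun i => 1 <= i <= n)%N ii && all (fun j => 1 <= j <= n)%N js,
      (size ii <= (if star then m1 else m0))%N,
      proper_fls n x &
      inIrr m0 m1 n (subf (wrd (cap_mono (if star then beta else alpha) ii js)) x)].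

Definition in_capelli_span m0 m1 n (star : bool) (u : fls) : Prop :=
  exists comb : seq (K * (seq nat * seq nat * fls)),
    (forall t, t \in comb -> is_capelli m0 m1 n star t.2.1.1 t.2.1.2 t.2.2) /\
    eqU m0 m1 n u (flatten [seq scalef t.1 t.2.2 | t <- comb]).

End FreeAlg.

From mathcomp Require Import all_boot all_algebra.
From mathcomp Require Import ring zify.
Set Implicit Arguments. Unset Strict Implicit. Unset Printing Implicit Defensive.
Import GRing.Theory.
Local Open Scope ring_scope.

Section FormalSums.
Variable K : fieldType.
Implicit Types (f g : fls K) (w : word).

Definition coef_eq f g := forall w, coef f w = coef g w.

Lemma fcoef_nil w : coef ([::] : fls K) w = 0.
Proof. by rewrite /coef big_nil. Qed.

(* Coefficients of a formal sum are computed term by term; the indicator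
   [(v == w)%:R] is kept as an atom so that [ring] can compare expansions. *)
Lemma fcoef_cons (p : K * word) f w :
  coef (p :: f) w = p.1 * (p.2 == w)%:R + coef f w.
Proof. by rewrite /coef big_cons; case: eqP; rewrite (mulr1, mulr0). Qed.

Lemma fcoef_wrd v w : coef (wrd K v) w = (v == w)%:R.
Proof. by rewrite fcoef_cons fcoef_nil mul1r addr0. Qed.

Lemma fcoef_cat f g w : coef (f ++ g) w = coef f w + coef g w.
Proof. by rewrite /coef big_cat. Qed.

Lemma fcoef_scale c f w : coef (scalef c f) w = c * coef f w.
Proof.
elim: f => [|p f IH]; first by rewrite /= !fcoef_nil mulr0.
by rewrite /= !fcoef_cons -/(scalef c f) IH /=; ring.
Qed.

Lemma fcoef_sub f g w : coef (subf f g) w = coef f w - coef g w.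
Proof. by rewrite /subf fcoef_cat fcoef_scale mulN1r. Qed.

Lemma fcoef_flatten_scale c (l : seq (fls K)) w :
  coef (flatten [seq scalef c x | x <- l]) w = c * coef (flatten l) w.
Proof.
elim: l => [|x l IH] /=; first by rewrite fcoef_nil mulr0.
by rewrite !fcoef_cat IH fcoef_scale mulrDr.
Qed.

Lemma scalef1 f : scalef 1 f = f.
Proof. by rewrite /scalef (eq_map (g := id)) ?map_id // => -[c v]; rewrite mul1r. Qed.

Lemma scalef_scalef a b f : scalef a (scalef b f) = scalef (a * b) f.
Proof. by rewrite /scalef -map_comp; apply: eq_map => p /=; rewrite mulrA. Qed.

Lemma mem_scalef c f p : p \in scalef c f -> exists2 q, q \in f & p.2 = q.2.
Proof. by move=> /mapP [q Hq ->]; exists q. Qed.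

Lemma sgn_neq0 b : sgn K b != 0.
Proof. by case: b; rewrite /sgn ?oppr_eq0 oner_eq0. Qed.

Lemma proper_cat n f g : proper_fls n f -> proper_fls n g -> proper_fls n (f ++ g).
Proof. by rewrite /proper_fls all_cat => -> ->. Qed.

Lemma proper_scale n c f : proper_fls n f -> proper_fls n (scalef c f).
Proof. by rewrite /proper_fls /scalef all_map. Qed.

End FormalSums.

Section Ideals.
Variables (K : fieldType) (m0 m1 n : nat).
Implicit Types f g h : fls K.

Lemma inI_coef f g : coef_eq f g -> inI m0 m1 n g -> inI m0 m1 n f.
Proof. by move=> e [gens [H1 H2]]; exists gens; split=> // w; rewrite e H2. Qed.

Lemma inI_zero f : coef_eq f [::] -> inI m0 m1 n f.
Proof. by move=> e; exists [::]; split=> // w; rewrite e. Qed.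

Lemma inI_cat f g : inI m0 m1 n f -> inI m0 m1 n g -> inI m0 m1 n (f ++ g).
Proof.
move=> [g1 [H1 E1]] [g2 [H2 E2]]; exists (g1 ++ g2); split.
  by move=> x; rewrite mem_cat => /orP[] ?; [apply: H1|apply: H2].
by move=> w; rewrite fcoef_cat E1 E2 map_cat flatten_cat fcoef_cat.
Qed.

Lemma inI_scale c f : inI m0 m1 n f -> inI m0 m1 n (scalef c f).
Proof.
move=> [g1 [H1 E1]].
exists [seq ((c * x.1.1.1.1, x.1.1.1.2), x.1.1.2, x.1.2, x.2) | x <- g1]; split.
  by move=> x /mapP [y /H1 Hy ->].
move=> w; rewrite fcoef_scale E1 -fcoef_flatten_scale.
rewrite -[in RHS]map_comp -[in LHS]map_comp.
by congr (coef (flatten _) w); apply: eq_map => y /=; rewrite !mulrA.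
Qed.

Lemma inIrr_coef f g : coef_eq f g -> inIrr m0 m1 n g -> inIrr m0 m1 n f.
Proof.
move=> e [gens [H1 H2]]; exists gens; split=> //.
by apply: inI_coef H2 => w; rewrite !fcoef_sub e.
Qed.

Lemma inIrr_of_inI f : inI m0 m1 n f -> inIrr m0 m1 n f.
Proof.
move=> H; exists [::]; split=> //.
by apply: inI_coef H => w; rewrite fcoef_sub /= fcoef_nil subr0.
Qed.

Lemma inIrr_cat f g : inIrr m0 m1 n f -> inIrr m0 m1 n g -> inIrr m0 m1 n (f ++ g).
Proof.
move=> [g1 [H1 E1]] [g2 [H2 E2]]; exists (g1 ++ g2); split.
  by move=> x; rewrite mem_cat => /orP[] ?; [apply: H1|apply: H2].
apply: inI_coef (inI_cat E1 E2) => w.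
by rewrite map_cat flatten_cat !(fcoef_sub, fcoef_cat); ring.
Qed.

Lemma inIrr_scale c f : inIrr m0 m1 n f -> inIrr m0 m1 n (scalef c f).
Proof.
move=> [g1 [H1 E1]]; exists [seq ((c * x.1.1, x.1.2), x.2) | x <- g1]; split.
  by move=> x /mapP [y /H1 Hy ->].
apply: inI_coef (inI_scale c E1) => w.
rewrite !(fcoef_sub, fcoef_scale) mulrBr -fcoef_flatten_scale.
rewrite -[in RHS]map_comp -[in LHS]map_comp.
by congr (_ - coef (flatten _) w); apply: eq_map => y /=; rewrite /scalef /= mulrA.
Qed.

(* [eqIrr f g]: f and g are congruent modulo Irr, i.e. have the same image
   under the projection p (when one of them lies in U(gl(n))). *)
Definition eqIrr f g := inIrr m0 m1 n (subf f g).

Lemma eqIrr_coef f g : coef_eq f g -> eqIrr f g.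
Proof.
by move=> e; apply: inIrr_of_inI; apply: inI_zero => w; rewrite fcoef_sub e subrr fcoef_nil.
Qed.

Lemma eqIrr_refl f : eqIrr f f.
Proof. exact: eqIrr_coef. Qed.

Lemma eqIrr_trans f g h : eqIrr f g -> eqIrr g h -> eqIrr f h.
Proof.
by move=> a b; apply: inIrr_coef (inIrr_cat a b) => w; rewrite fcoef_cat !fcoef_sub; ring.
Qed.

Lemma eqIrr_cat f g f' g' : eqIrr f g -> eqIrr f' g' -> eqIrr (f ++ f') (g ++ g').
Proof.
move=> a b; apply: inIrr_coef (inIrr_cat a b) => w.
by rewrite fcoef_cat !fcoef_sub !fcoef_cat; ring.
Qed.

Lemma eqIrr_scale c f g : eqIrr f g -> eqIrr (scalef c f) (scalef c g).
Proof.
move=> a; apply: inIrr_coef (inIrr_scale c a) => w.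
by rewrite fcoef_scale !fcoef_sub !fcoef_scale; ring.
Qed.

End Ideals.

Section Words.
Variables (m0 m1 n : nat).
Implicit Types (u v w : word) (g s : sym).
Local Notation vw := (valid_word m0 m1 n).

Lemma valid_word_cat u v : vw (u ++ v) = vw u && vw v.
Proof. by rewrite /valid_word all_cat. Qed.

Lemma valid_word_cons l v : vw (l :: v) = valid_letter m0 m1 n l && vw v.
Proof. by []. Qed.

Lemma nonvirtual_neq g s : virtual g -> ~~ virtual s -> (s == g) = false.
Proof. by move=> Hg Hs; apply/eqP => E; rewrite E Hg in Hs. Qed.

Lemma proper_nonvirtual s : proper_sym n s -> ~~ virtual s.
Proof. by case: s => [[]|]. Qed.

Lemma proper_valid s : proper_sym n s -> valid_sym m0 m1 n s.
Proof. by case: s => [[]|]. Qed.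

Lemma valid_nonvirtual_proper s : valid_sym m0 m1 n s -> ~~ virtual s -> proper_sym n s.
Proof. by case: s => [[]|]. Qed.

Definition proper_letter (l : letter) := proper_sym n l.1 && proper_sym n l.2.

Definition right_nonvirtual (l : letter) := ~~ virtual l.2.

Definition virtual_occ w :=
  (count (fun l : letter => virtual l.1) w + count (fun l : letter => virtual l.2) w)%N.

(* Every virtual symbol occurs as often on the left as on the right of the
   letters; Capelli monomials and all words derived from them are balanced. *)
Definition balanced w := forall g, virtual g ->
  count (fun l : letter => l.1 == g) w = count (fun l : letter => l.2 == g) w.

Lemma virtual_occ_cat u v : virtual_occ (u ++ v) = (virtual_occ u + virtual_occ v)%N.
Proof. by rewrite /virtual_occ !count_cat; lia. Qed.

Lemma virtual_occ_cons l w :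
  virtual_occ (l :: w) = (virtual l.1 + virtual l.2 + virtual_occ w)%N.
Proof. by rewrite /virtual_occ /=; lia. Qed.

Lemma virtual_occ_proper w : all proper_letter w -> virtual_occ w = 0%N.
Proof.
move=> /allP Hw; rewrite /virtual_occ !(@eq_in_count _ _ pred0) ?count_pred0 //;
  by move=> l /Hw /andP [H1 H2] /=; apply/negbTE/proper_nonvirtual.
Qed.

Lemma virtual_occ_perm u v : perm_eq u v -> virtual_occ u = virtual_occ v.
Proof. by move=> /permP E; rewrite /virtual_occ !E. Qed.

Lemma balanced_perm u v : perm_eq u v -> balanced u -> balanced v.
Proof. by move=> /permP E Hu g Hg; rewrite -!E Hu. Qed.

Lemma swap_perm u y l v : perm_eq (rcons u y ++ l :: v) (u ++ l :: y :: v).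
Proof. by rewrite cat_rcons perm_cat2l; exact: (permEl (perm_catCA [:: y] [:: l] v)). Qed.

Lemma balanced_proper w : vw w -> balanced w ->
  all right_nonvirtual w -> all proper_letter w.
Proof.
move=> /allP Hw Hb /allP Ha; apply/allP => l Hl.
have /andP [H1 H2] := Hw l Hl.
rewrite /proper_letter (valid_nonvirtual_proper H2 (Ha l Hl)) andbT.
apply: valid_nonvirtual_proper H1 _; apply/negP => Hv.
have := Hb _ Hv; rewrite (@eq_in_count _ (fun l0 : letter => l0.2 == l.1) pred0).
  by rewrite count_pred0 => /eqP; rewrite -leqn0 leqNgt -has_count => /hasP []; exists l.
by move=> y Hy /=; apply: nonvirtual_neq Hv (Ha y Hy).
Qed.

Lemma count_mkseq_true (T : Type) (P : pred T) F k :
  (forall r, P (F r)) -> count P (mkseq F k) = k.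
Proof. by move=> H; rewrite count_map (eq_count (a2 := predT)) ?count_predT ?size_iota. Qed.

Lemma count_mkseq_false (T : Type) (P : pred T) F k :
  (forall r, ~~ P (F r)) -> count P (mkseq F k) = 0%N.
Proof.
by move=> H; rewrite count_map (eq_count (a2 := pred0)) ?count_pred0 // => r /=; apply/negbTE.
Qed.

Lemma split_last (P : pred letter) w : ~~ all P w ->
  exists u l v, [/\ w = u ++ l :: v, ~~ P l & all P v].
Proof.
elim/last_ind: w => [|w x IH] //; rewrite all_rcons.
case Px: (P x) => /= H.
  have [u [l [v [-> Hl Hv]]]] := IH H.
  by exists u, l, (rcons v x); rewrite rcons_cat /= all_rcons Px Hv.
by exists w, x, [::]; rewrite cats1 Px.
Qed.

End Words.

Section Reduction.
Variables (K : fieldType) (m0 m1 n : nat).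
Implicit Types (f r : fls K) (u v w : word).
Local Notation vw := (valid_word m0 m1 n).
Local Notation vl := (valid_letter m0 m1 n).
Local Notation eqI := (@eqIrr K m0 m1 n).

Lemma supercommute u x y v : vw u -> vl x -> vl y -> vw v ->
  eqI (wrd K (u ++ x :: y :: v))
    [:: (sgn K (lpar x && lpar y), u ++ y :: x :: v);
        (dlt K x.2 y.1, u ++ (x.1, y.2) :: v);
        (- (sgn K (lpar x && lpar y) * dlt K x.1 y.2), u ++ (y.1, x.2) :: v)].
Proof.
move=> Hu Hx Hy Hv; apply: inIrr_of_inI; exists [:: (1, u, x, y, v)]; split.
  by move=> g; rewrite inE => /eqP -> /=; rewrite Hu Hx Hy Hv.
move=> w; congr coef; rewrite /subf /scalef /=.
by congr [:: (_, _); (_, _); (_, _); (_, _)]; ring.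
Qed.

(* A monomial whose first acting letter e_{ab} has a virtual right symbol b
   is irregular (take i = 1 in the definition), hence lies in Irr. *)
Lemma irregular_tail u l : vw u -> vl l -> virtual l.2 -> eqI (wrd K (u ++ [:: l])) [::].
Proof.
move=> Hu Hl Hv; exists [:: (1, u, [:: l])]; split.
  move=> g; rewrite inE => /eqP -> /=; split; rewrite /valid_word ?Hl //.
  by exists 0%N, l.2; rewrite /= eqxx.
apply: inI_zero => w.
by rewrite !(fcoef_sub, fcoef_cat, fcoef_scale, fcoef_wrd, fcoef_nil) /=; ring.
Qed.

(* [short e w r]: r is a combination of proper monomials, each of length at
   most size w - (virtual_occ w + e) / 2.  Eliminating a pair of virtual
   symbols shortens a word by one letter, which is what this bound tracks. *)
Definition short (e : nat) w r := proper_fls n r /\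
  forall p, p \in r -> (2 * size p.2 + e + virtual_occ w <= 2 * size w)%N.

Definition reducible w := exists r, short 0 w r /\ eqI (wrd K w) r.

Lemma short_cat e w r r' : short e w r -> short e w r' -> short e w (r ++ r').
Proof.
move=> [P B] [P' B']; split; first exact: proper_cat.
by move=> p; rewrite mem_cat => /orP [/B|/B'].
Qed.

Lemma short_scale e w c r : short e w r -> short e w (scalef c r).
Proof. by move=> [P B]; split=> [|p /mem_scalef [q /B Hq ->]] //; exact: proper_scale. Qed.

Lemma short_perm e w w' r : perm_eq w w' -> short e w r -> short e w' r.
Proof.
by move=> Hp [P B]; split=> // p; rewrite -(perm_size Hp) -(virtual_occ_perm Hp); apply: B.
Qed.

Lemma short_le e e' w r : (e' <= e)%N -> short e w r -> short e' w r.
Proof. by move=> He [P B]; split=> // p /B; lia. Qed.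

Lemma short_mono e w t r : short 0 t r ->
  (e + virtual_occ w + 2 * size t <= 2 * size w + virtual_occ t)%N -> short e w r.
Proof. by move=> [P B] H; split=> // p /B; lia. Qed.

(* The contraction terms created while the letter l travels to the right
   end of the word u ++ l :: v, crossing the letters of v one by one
   (each crossing contributes d(l2,y1) u e_{l1 y2} v', with the super-sign
   accumulated so far). *)
Fixpoint transit u (l : letter) v : fls K :=
  match v with
  | [::] => [::]
  | y :: v' => scalef (dlt K l.2 y.1) (wrd K (u ++ (l.1, y.2) :: v')) ++
               scalef (sgn K (lpar l && lpar y)) (transit (rcons u y) l v')
  end.

(* Reduction of a balanced word, assuming all shorter balanced words reduce:
   move the last letter l with virtual right symbol to the right end, where
   it is killed by [irregular_tail]; all terms produced on the way are
   shorter balanced words. *)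
Section Transit.
Variables (N : nat) (l : letter).
Hypotheses (Hl : vl l) (Hl2 : virtual l.2).
Hypothesis reducible_shorter : forall w, (size w < N)%N -> vw w -> balanced w -> reducible w.

(* The contraction d(l2,y1) u e_{l1 y2} v removes the virtual pair l2 = y1:
   the resulting word is shorter and still balanced, hence reducible. *)
Lemma contract_left u y v : vw u -> vl y -> vw v ->
  balanced (u ++ l :: y :: v) -> (size (u ++ l :: y :: v) <= N)%N ->
  exists r, short 0 (u ++ l :: y :: v) r /\
            eqI (scalef (dlt K l.2 y.1) (wrd K (u ++ (l.1, y.2) :: v))) r.
Proof.
move=> Hu Hy Hv Hbal Hsz; rewrite /dlt; case: (eqVneq l.2 y.1) => E; last first.
  exists [::]; split=> //; apply: eqIrr_coef => x; rewrite fcoef_scale fcoef_nil; ring.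
have [|||r [Sr Er]] := reducible_shorter (w := u ++ (l.1, y.2) :: v).
- by move: Hsz; rewrite !size_cat /=; lia.
- move: Hl Hy; rewrite valid_word_cat valid_word_cons Hu Hv /valid_letter /=.
  by move=> /andP [-> _] /andP [_ ->].
- move=> g Hg; move: (Hbal g Hg); rewrite !count_cat /= E; lia.
exists r; split; last by rewrite scalef1.
by apply: short_mono Sr _; rewrite !size_cat !virtual_occ_cat !virtual_occ_cons /= -E Hl2; lia.
Qed.

(* The contraction d(l1,y2) u e_{y1 l2} v (for y2 not virtual) removes the
   two proper symbols l1 = y2 and keeps all virtual ones, so its reduction
   gains one letter over the budget of u ++ l :: y :: v. *)
Lemma contract_right u y v : vw u -> vl y -> vw v -> ~~ virtual y.2 ->
  balanced (u ++ l :: y :: v) -> (size (u ++ l :: y :: v) <= N)%N ->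
  exists r, short 2 (u ++ l :: y :: v) r /\
            eqI (scalef (dlt K l.1 y.2) (wrd K (u ++ (y.1, l.2) :: v))) r.
Proof.
move=> Hu Hy Hv Hy2 Hbal Hsz; rewrite /dlt; case: (eqVneq l.1 y.2) => E; last first.
  exists [::]; split=> //; apply: eqIrr_coef => x; rewrite fcoef_scale fcoef_nil; ring.
have [|||r [Sr Er]] := reducible_shorter (w := u ++ (y.1, l.2) :: v).
- by move: Hsz; rewrite !size_cat /=; lia.
- move: Hl Hy; rewrite valid_word_cat valid_word_cons Hu Hv /valid_letter /=.
  by move=> /andP [_ ->] /andP [-> _].
- move=> g Hg; move: (Hbal g Hg); rewrite !count_cat /= E (nonvirtual_neq Hg Hy2); lia.
exists r; split; last by rewrite scalef1.
apply: short_mono Sr _; rewrite !size_cat !virtual_occ_cat !virtual_occ_cons /= E.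
by rewrite (negbTE Hy2); lia.
Qed.

(* Moving l across v: the word equals the transit terms plus a short
   remainder, since l is killed once it reaches the right end. *)
Lemma transit_split v u : vw u -> vw v -> all right_nonvirtual v ->
  balanced (u ++ l :: v) -> (size (u ++ l :: v) <= N)%N ->
  exists r, short 2 (u ++ l :: v) r /\ eqI (wrd K (u ++ l :: v)) (transit u l v ++ r).
Proof.
elim: v u => [|y v IH] u Hu Hv Hall Hbal Hsz.
  by exists [::]; split; last exact: irregular_tail.
move: Hv Hall => /= /andP [Hy Hv] /andP [Hy2 Hall].
have Hp := swap_perm u y l v; set s := sgn K (lpar l && lpar y).
have [|||r1 [S1 E1]] := IH (rcons u y) _ Hv Hall.
- by rewrite -cats1 valid_word_cat Hu /valid_word /= Hy.
- by apply: balanced_perm Hbal; rewrite perm_sym.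
- by rewrite (perm_size Hp).
have [r2 [S2 E2]] := contract_right Hu Hy Hv Hy2 Hbal Hsz.
exists (scalef s r1 ++ scalef (- s) r2); split.
  by apply: short_cat; apply: short_scale => //; apply: short_perm Hp S1.
apply: eqIrr_trans (supercommute Hu Hl Hy Hv) _.
apply: (eqIrr_trans (g := scalef s (wrd K (rcons u y ++ l :: v)) ++
  scalef (dlt K l.2 y.1) (wrd K (u ++ (l.1, y.2) :: v)) ++
  scalef (- s) (scalef (dlt K l.1 y.2) (wrd K (u ++ (y.1, l.2) :: v))))).
  apply: eqIrr_coef => x; rewrite cat_rcons.
  by rewrite !(fcoef_cons, fcoef_cat, fcoef_scale, fcoef_wrd, fcoef_nil) /= /s; ring.
apply: eqIrr_trans (eqIrr_cat (eqIrr_scale s E1)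
  (eqIrr_cat (eqIrr_refl _ _ _ _) (eqIrr_scale (- s) E2))) _.
by apply: eqIrr_coef => x; rewrite /= !(fcoef_cons, fcoef_cat, fcoef_scale) /s; ring.
Qed.

Lemma transit_reducible v u : vw u -> vw v -> all right_nonvirtual v ->
  balanced (u ++ l :: v) -> (size (u ++ l :: v) <= N)%N ->
  exists r, short 0 (u ++ l :: v) r /\ eqI (transit u l v) r.
Proof.
elim: v u => [|y v IH] u Hu Hv Hall Hbal Hsz; first by exists [::]; split; last exact: eqIrr_refl.
move: Hv Hall => /= /andP [Hy Hv] /andP [Hy2 Hall].
have Hp := swap_perm u y l v.
have [|||r1 [S1 E1]] := IH (rcons u y) _ Hv Hall.
- by rewrite -cats1 valid_word_cat Hu /valid_word /= Hy.
- by apply: balanced_perm Hbal; rewrite perm_sym.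
- by rewrite (perm_size Hp).
have [r2 [S2 E2]] := contract_left Hu Hy Hv Hbal Hsz.
exists (r2 ++ scalef (sgn K (lpar l && lpar y)) r1); split.
  by apply: short_cat => //; apply: short_scale; apply: short_perm Hp S1.
exact: eqIrr_cat E2 (eqIrr_scale _ E1).
Qed.

End Transit.

(* Either it is already proper, or its last letter
   with a virtual right symbol is moved to the right end. *)
Lemma reducible_step N w :
  (forall w', (size w' < N)%N -> vw w' -> balanced w' -> reducible w') ->
  (size w <= N)%N -> vw w -> balanced w -> reducible w.
Proof.
move=> IH Hsz Hw Hb.
have [Ha|Ha] := boolP (all right_nonvirtual w).
  have Hp := balanced_proper Hw Hb Ha.
  exists (wrd K w); split; last exact: eqIrr_refl.
  split; first by rewrite /proper_fls /= Hp.
  by move=> p; rewrite inE => /eqP -> /=; rewrite (virtual_occ_proper Hp) !addn0.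
have [u [l [v [Ew Hl Hv]]]] := split_last Ha; rewrite negbK in Hl; subst w.
move: Hw; rewrite valid_word_cat valid_word_cons => /and3P [Hu Hvl Hvv].
have [r [Sr Er]] := transit_split Hvl Hl IH Hu Hvv Hv Hb Hsz.
have [r' [Sr' Er']] := transit_reducible Hvl Hl IH Hu Hvv Hv Hb Hsz.
exists (r' ++ r); split; first by apply: short_cat Sr' (short_le _ Sr).
exact: eqIrr_trans Er (eqIrr_cat Er' (eqIrr_refl _ _ _ _)).
Qed.

Lemma reducible_balanced w : vw w -> balanced w -> reducible w.
Proof.
suff: forall N w, (size w <= N)%N -> vw w -> balanced w -> reducible w by apply.
by elim=> [|N IH] w' Hs Hw Hb; apply: (reducible_step _ Hs Hw Hb).
Qed.

End Reduction.

Section CapelliMonomials.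
Variables (K : fieldType) (m0 m1 n : nat).
Local Notation vw := (valid_word m0 m1 n).
Local Notation eqI := (@eqIrr K m0 m1 n).

Lemma transit_none u (l : letter) v :
  all (fun y : letter => y.1 != l.2) v -> coef_eq (transit K u l v) [::].
Proof.
elim: v u => [|y v IH] u //= /andP [Hy Hv] x.
have Hly : (l.2 == y.1) = false by rewrite eq_sym (negbTE Hy).
by rewrite fcoef_cons fcoef_scale (IH _ Hv) fcoef_nil /dlt Hly /=; ring.
Qed.

Lemma transit_single u (l : letter) v1 y v2 :
  all (fun x : letter => x.1 != l.2) v1 -> y.1 = l.2 ->
  all (fun x : letter => x.1 != l.2) v2 ->
  exists2 c : K, c != 0 &
    coef_eq (transit K u l (v1 ++ y :: v2)) (scalef c (wrd K (u ++ v1 ++ (l.1, y.2) :: v2))).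
Proof.
elim: v1 u => [|x v1 IH] u /= H1 Ey H2.
  exists 1; first exact: oner_neq0.
  move=> w; rewrite !fcoef_cons fcoef_scale (transit_none _ H2) !fcoef_nil /dlt Ey eqxx /=; ring.
move/andP: H1 => [Hx H1]; have [c Hc E] := IH (rcons u x) H1 Ey H2.
have Hlx : (l.2 == x.1) = false by rewrite eq_sym (negbTE Hx).
exists (sgn K (lpar l && lpar x) * c); first by rewrite mulf_neq0 ?sgn_neq0.
move=> w; rewrite fcoef_cons fcoef_scale E !fcoef_scale !fcoef_cons fcoef_nil cat_rcons.
by rewrite /dlt Hlx /=; ring.
Qed.

(* Partial Capelli monomials of a proper word w0 = e_{a_1 b_1} ... e_{a_h b_h}:
   the first k letters are split through the virtual symbols virt 1, ..., virt k,
     e_{a_1 v_1} ... e_{a_k v_k} e_{v_1 b_1} ... e_{v_k b_k} e_{a_{k+1} b_{k+1}} ...,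
   so that k = 0 gives w0 and k = h gives the Capelli monomial. *)
Section Partial.
Variable virt : nat -> sym.
Hypotheses (virt_inj : injective virt) (virt_virtual : forall k, virtual (virt k)).
Variable w0 : word.
Hypothesis w0_proper : all (proper_letter n) w0.
Hypothesis virt_valid : forall k, (0 < k <= size w0)%N -> valid_sym m0 m1 n (virt k).

Let wl r := nth (prp 0, prp 0) w0 r.

Definition cap_left k := mkseq (fun r => ((wl r).1, virt r.+1)) k.
Definition cap_right k := mkseq (fun r => (virt r.+1, (wl r).2)) k.
Definition cap_partial k := cap_left k ++ cap_right k ++ drop k w0.

Lemma wl_nonvirtual r : ~~ virtual (wl r).1 && ~~ virtual (wl r).2.
Proof.
rewrite /wl; case: (ltnP r (size w0)) => Hr; last by rewrite nth_default.
have /andP [H1 H2] := allP w0_proper _ (mem_nth (prp 0, prp 0) Hr).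
by rewrite (proper_nonvirtual H1) (proper_nonvirtual H2).
Qed.

Lemma drop_proper k : all (proper_letter n) (drop k w0).
Proof. by apply/allP => y /mem_drop; apply: (allP w0_proper). Qed.

Lemma valid_cap_partial k : (k <= size w0)%N -> vw (cap_partial k).
Proof.
move=> Hk; have Hwl r : (r < k)%N -> valid_letter m0 m1 n (wl r).
  move=> Hr; have Hrw := leq_trans Hr Hk.
  have /andP [H1 H2] := allP w0_proper _ (mem_nth (prp 0, prp 0) Hrw).
  by rewrite /valid_letter !proper_valid.
have Hv r : (r < k)%N -> valid_sym m0 m1 n (virt r.+1).
  by move=> Hr; apply: virt_valid; rewrite /= (leq_trans Hr Hk).
rewrite /cap_partial !valid_word_cat; apply/and3P; split.
- apply/allP => l /mapP [r]; rewrite mem_iota add0n => /andP [_ Hr] ->.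
  by rewrite /valid_letter /= Hv // andbT; case/andP: (Hwl r Hr).
- apply/allP => l /mapP [r]; rewrite mem_iota add0n => /andP [_ Hr] ->.
  by rewrite /valid_letter /= Hv //; case/andP: (Hwl r Hr).
- apply/allP => l /(allP (drop_proper k)) /andP [H1 H2].
  by rewrite /valid_letter !proper_valid.
Qed.

Lemma size_cap_partial k : (k <= size w0)%N -> size (cap_partial k) = (size w0 + k)%N.
Proof. by move=> Hk; rewrite /cap_partial !size_cat !size_mkseq size_drop subnKC // addnC. Qed.

Lemma virtual_occ_cap_partial k : virtual_occ (cap_partial k) = (2 * k)%N.
Proof.
have Ll1 : count (fun l : letter => virtual l.1) (cap_left k) = 0%N.
  by apply: count_mkseq_false => r; case/andP: (wl_nonvirtual r).
have Ll2 : count (fun l : letter => virtual l.2) (cap_left k) = k.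
  by apply: count_mkseq_true => r; exact: virt_virtual.
have Lr1 : count (fun l : letter => virtual l.1) (cap_right k) = k.
  by apply: count_mkseq_true => r; exact: virt_virtual.
have Lr2 : count (fun l : letter => virtual l.2) (cap_right k) = 0%N.
  by apply: count_mkseq_false => r; case/andP: (wl_nonvirtual r).
rewrite /cap_partial !virtual_occ_cat (virtual_occ_proper (drop_proper k)).
by rewrite /virtual_occ Ll1 Ll2 Lr1 Lr2; lia.
Qed.

(* Each virt r occurs once on each side: in cap_left on the right and in
   cap_right on the left. *)
Lemma balanced_cap_partial k : balanced (cap_partial k).
Proof.
move=> g Hg; have [Hl1 Hr2] : count (fun l : letter => l.1 == g) (cap_left k) = 0%N /\
    count (fun l : letter => l.2 == g) (cap_right k) = 0%N.
  by split; apply: count_mkseq_false => r; case/andP: (wl_nonvirtual r) => H1 H2;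
    rewrite /= nonvirtual_neq.
have Hdrop (P : letter -> sym) : (forall l, proper_letter n l -> ~~ virtual (P l)) ->
    count (fun l : letter => P l == g) (drop k w0) = 0%N.
  move=> HP; apply/eqP; rewrite -leqn0 leqNgt -has_count.
  by apply/hasPn => l /(allP (drop_proper k)) /HP Hl /=; rewrite nonvirtual_neq.
rewrite /cap_partial !count_cat Hl1 Hr2 !Hdrop; first by rewrite !add0n !addn0 !count_map.
all: move=> l /andP [H1 H2]; by [apply: proper_nonvirtual H1 | apply: proper_nonvirtual H2].
Qed.

Lemma cap_partial_step k : cap_partial k.+1 =
  cap_left k ++ ((wl k).1, virt k.+1) :: (cap_right k ++ (virt k.+1, (wl k).2) :: drop k.+1 w0).
Proof. by rewrite /cap_partial /cap_left /cap_right !mkseqS !cat_rcons. Qed.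

Lemma cap_partial_contract k : (k < size w0)%N ->
  cap_left k ++ cap_right k ++ ((wl k).1, (wl k).2) :: drop k.+1 w0 = cap_partial k.
Proof. by move=> Hk; rewrite /cap_partial (drop_nth (prp 0, prp 0) Hk) -surjective_pairing. Qed.

(* Apart from its partner e_{virt(k+1) b_{k+1}}, no letter to the right of
   e_{a_{k+1} virt(k+1)} in the (k+1)-th partial monomial starts with
   virt(k+1), since virt is injective and w0 is proper. *)
Lemma cap_right_skip k : all (fun y : letter => y.1 != virt k.+1) (cap_right k).
Proof.
apply/allP => y /mapP [r]; rewrite mem_iota add0n => /andP [_ Hr] -> /=.
by rewrite (inj_eq virt_inj) eqSS neq_ltn Hr.
Qed.

Lemma drop_skip k : all (fun y : letter => y.1 != virt k.+1) (drop k.+1 w0).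
Proof.
apply/allP => y /(allP (drop_proper _)) /andP [/proper_nonvirtual H1 _].
by rewrite nonvirtual_neq.
Qed.

Lemma cap_partial_right_nonvirtual k :
  all right_nonvirtual (cap_right k ++ (virt k.+1, (wl k).2) :: drop k.+1 w0).
Proof.
rewrite all_cat /=; apply/and3P; split.
- by apply/allP => y /mapP [r _ ->]; case/andP: (wl_nonvirtual r).
- by case/andP: (wl_nonvirtual k).
- by apply/allP => y /(allP (drop_proper _)) /andP [_ /proper_nonvirtual].
Qed.

(* Passing from k to
   k.+1, the letter e_{a_{k+1} virt(k+1)} travels to the right end; its only
   contraction, with e_{virt(k+1) b_{k+1}}, gives back the k-th monomial. *)
Lemma cap_partial_triangular k : (k <= size w0)%N ->
  exists2 c : K, c != 0 & exists2 r : fls K,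
    proper_fls n r /\ (forall p, p \in r -> (size p.2 < size w0)%N) &
    eqI (wrd K (cap_partial k)) (scalef c (wrd K w0) ++ r).
Proof.
elim: k => [|k IH] Hk.
  exists 1; first exact: oner_neq0.
  by exists [::]; last by rewrite cats0 scalef1 /cap_partial /= drop0; apply: eqIrr_refl.
have [c Hc [r0 [P0 B0] E0]] := IH (ltnW Hk).
have := valid_cap_partial Hk; have := balanced_cap_partial k.+1.
rewrite cap_partial_step => Hb; rewrite valid_word_cat valid_word_cons => /and3P [Hu Hl Hv].
have [r [[Pr Br] Er]] := transit_split Hl (virt_virtual _)
  (fun w _ => @reducible_balanced K m0 m1 n w) Hu Hv (cap_partial_right_nonvirtual k) Hb (leqnn _).
have [c' Hc' Ec'] := transit_single (cap_left k) (l := ((wl k).1, virt k.+1))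
  (y := (virt k.+1, (wl k).2)) (cap_right_skip k) erefl (drop_skip k).
exists (c' * c); first by rewrite mulf_neq0.
exists (scalef c' r0 ++ r); first split.
- by apply: proper_cat => //; apply: proper_scale.
- move=> p; rewrite mem_cat => /orP [/mem_scalef [q /B0 Hq ->] //|/Br].
  by rewrite -cap_partial_step size_cap_partial // virtual_occ_cap_partial; lia.
apply: eqIrr_trans Er _; apply: (eqIrr_trans (g := scalef c' (wrd K (cap_partial k)) ++ r)).
  apply: eqIrr_cat (eqIrr_refl _ _ _ _); apply: eqIrr_coef => x.
  by rewrite Ec' cap_partial_contract.
apply: eqIrr_trans (eqIrr_cat (eqIrr_scale c' E0) (eqIrr_refl _ _ _ _)) _.
by apply: eqIrr_coef => x; rewrite !(fcoef_cat, fcoef_scale); ring.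
Qed.

End Partial.

End CapelliMonomials.

Section CapelliSpan.
Variables (K : fieldType) (m0 m1 n : nat) (star : bool).
Implicit Types f g : fls K.
Local Notation span := (@in_capelli_span K m0 m1 n star).

Lemma in_span_coef f g : coef_eq f g -> span g -> span f.
Proof.
move=> e [comb [H1 H2]]; exists comb; split=> //.
by apply: inI_coef H2 => w; rewrite !fcoef_sub e.
Qed.

Lemma in_span_nil : span [::].
Proof. by exists [::]; split=> //; apply: inI_zero => w; rewrite fcoef_sub /= !fcoef_nil subr0. Qed.

Lemma in_span_cat f g : span f -> span g -> span (f ++ g).
Proof.
move=> [c1 [H1 E1]] [c2 [H2 E2]]; exists (c1 ++ c2); split.
  by move=> x; rewrite mem_cat => /orP[] ?; [apply: H1|apply: H2].
apply: inI_coef (inI_cat E1 E2) => w.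
by rewrite map_cat flatten_cat !(fcoef_sub, fcoef_cat); ring.
Qed.

Lemma in_span_scale c f : span f -> span (scalef c f).
Proof.
move=> [c1 [H1 E1]]; exists [seq (c * t.1, t.2) | t <- c1]; split.
  by move=> x /mapP [y /H1 Hy ->].
apply: inI_coef (inI_scale c E1) => w.
rewrite !(fcoef_sub, fcoef_scale) mulrBr -fcoef_flatten_scale.
rewrite -[in RHS]map_comp -[in LHS]map_comp.
by congr (_ - coef (flatten _) w); apply: eq_map => y /=; rewrite scalef_scalef.
Qed.

Lemma in_span_capelli ii js x : is_capelli m0 m1 n star ii js x -> span x.
Proof.
move=> H; exists [:: (1, (ii, js, x))]; split; first by move=> t; rewrite inE => /eqP ->.
by apply: inI_zero => w; rewrite /= fcoef_sub fcoef_cat fcoef_nil fcoef_scale; ring.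
Qed.

Lemma in_span_monomials f : (forall p, p \in f -> span (wrd K p.2)) -> span f.
Proof.
elim: f => [|p f IH] H; first exact: in_span_nil.
apply: (in_span_coef (g := scalef p.1 (wrd K p.2) ++ f)).
  by move=> w; rewrite fcoef_cons fcoef_cat fcoef_scale fcoef_wrd.
apply: in_span_cat; first by apply: in_span_scale; apply: H; rewrite inE eqxx.
by apply: IH => q Hq; apply: H; rewrite inE Hq orbT.
Qed.

Definition cap_virt : nat -> sym := if star then beta else alpha.
Definition cap_bound := if star then m1 else m0.

Definition sym_index (s : sym) := if s is inr i then i else 0%N.

Lemma proper_sym_index s : proper_sym n s -> prp (sym_index s) = s /\ (1 <= sym_index s <= n)%N.
Proof. by case: s => [[]|]. Qed.

Lemma cap_partial_full w0 : all (proper_letter n) w0 ->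
  cap_partial cap_virt w0 (size w0) =
  cap_mono cap_virt [seq sym_index l.1 | l <- w0] [seq sym_index l.2 | l <- w0].
Proof.
move=> /allP Hw0; rewrite /cap_partial drop_size cats0 /cap_mono size_map.
rewrite /cap_left /cap_right /mkseq.
have Hnth r : (r < size w0)%N ->
    prp (sym_index (nth (prp 0, prp 0) w0 r).1) = (nth (prp 0, prp 0) w0 r).1 /\
    prp (sym_index (nth (prp 0, prp 0) w0 r).2) = (nth (prp 0, prp 0) w0 r).2.
  move=> Hr; have /andP [H1 H2] := Hw0 _ (mem_nth (prp 0, prp 0) Hr).
  by rewrite (proj1 (proper_sym_index H1)) (proj1 (proper_sym_index H2)).
congr (_ ++ _); apply/eq_in_map => r; rewrite mem_iota add0n => /andP [_ /[dup] Hr /Hnth [E1 E2]];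
  by rewrite (nth_map (prp 0, prp 0)) ?E1 ?E2.
Qed.

(* Every proper monomial of length at most the number of available virtual
   symbols is a combination of column Capelli bitableaux (resp.
   *-bitableaux): by triangularity, w0 is c^-1 times a bitableau minus
   shorter proper monomials, which lie in the span by induction. *)
Lemma in_span_proper_word w0 : all (proper_letter n) w0 -> (size w0 <= cap_bound)%N ->
  span (wrd K w0).
Proof.
have [N] := ubnP (size w0); elim: N w0 => // N IH w0 /ltnSE HN Hw0 Hm.
have virt_inj : injective cap_virt by rewrite /cap_virt; case: star => a b [].
have virt_virtual k : virtual (cap_virt k) by rewrite /cap_virt; case: star.
have virt_valid k : (0 < k <= size w0)%N -> valid_sym m0 m1 n (cap_virt k).
  by move: Hm; rewrite /cap_virt /cap_bound; case: star => Hm /andP [H1 H2] /=;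
    rewrite H1 (leq_trans H2 Hm).
have [c Hc [r [Pr Br] Er]] :=
  cap_partial_triangular K virt_inj virt_virtual Hw0 virt_valid (leqnn (size w0)).
have Hx : span (scalef c (wrd K w0) ++ r).
  apply: (in_span_capelli (ii := [seq sym_index l.1 | l <- w0])
    (js := [seq sym_index l.2 | l <- w0])).
  split; rewrite ?size_map //.
  - by rewrite !all_map; apply/andP; split; apply/allP => l /(allP Hw0) /andP [H1 H2] /=;
      [case: (proper_sym_index H1) | case: (proper_sym_index H2)].
  - by apply: proper_cat => //; apply: proper_scale; rewrite /proper_fls /= andbT.
  - by move: Er; rewrite cap_partial_full.
have Hr : span r.
  apply: in_span_monomials => p Hp; apply: IH; [exact: leq_trans (Br p Hp) HN | exact: (allP Pr) |].
  exact: leq_trans (ltnW (Br p Hp)) Hm.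
apply: (in_span_coef (g := scalef c^-1 ((scalef c (wrd K w0) ++ r) ++ scalef (-1) r))); last first.
  by apply: in_span_scale; apply: in_span_cat => //; apply: in_span_scale.
by move=> w; rewrite !(fcoef_cat, fcoef_scale); field.
Qed.

End CapelliSpan.

(* Each monomial of u is proper, and M bounds the lengths of the monomials. *)
Theorem mainTheorem6 (K : fieldType) (hK : [pchar K] =i pred0) (n : nat)
  (u : fls K) :
  proper_fls n u ->
  exists M : nat, forall m0 m1 : nat, (M <= m0)%N -> (M <= m1)%N ->
    in_capelli_span m0 m1 n false u /\ in_capelli_span m0 m1 n true u.
Proof.
move=> Hu; exists (\max_(q <- u) size q.2)%N => m0 m1 H0 H1.
have Hsize p : p \in u -> (size p.2 <= \max_(q <- u) size q.2)%N.
  by move=> Hp; apply: leq_bigmax_seq.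
split; apply: in_span_monomials => p Hp; apply: in_span_proper_word; try exact: (allP Hu).
- exact: leq_trans (Hsize p Hp) H0.
- exact: leq_trans (Hsize p Hp) H1.
Qed.
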